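(* Let $q$ be an odd prime power with characteristic $p$, let $1\le n\le q^2-1$, and write $n=u+vq$ with $0\le u,v\le q-1$. Define \[ \mathrm{III}=\sum_{\substack{\alpha,\beta\ge 0,\ \beta\le q-2\\ 0<\alpha+\beta\le q-1}}\ \sum_{\substack{k\ge 1,\ j\ge 0\\ k+j\le q-1\\ 2k-j\equiv\alpha+\beta\pmod{q-1}\\ q(q-1)+k-j-(\alpha+\beta q)=n}}\binom{\alpha+\beta}{\alpha}\binom{q-1-k}{j}(-1)^j . \] Then in $\mathbb F_p$, \[ \mathrm{III}=\sum_{\substack{-1\le s\le 1\\ \max\{s-\frac{u+v}{q-1},\,v-q+1\}\le\epsilon<\min\{s-\frac{u+v}{q-1}+1,\,v\}}}(-1)^{v+\epsilon}\binom{u+2v-(s-\epsilon)(q-1)-\epsilon}{(s-2\epsilon+1)(q-1)-2u-v-\epsilon} -\sum_{\max\{-2,\,v-q+\frac{u+v}{q-1}\}<s\le\min\{1,\,v-q+\frac{u+v}{q-1}+1\}}\binom{u+v-(s-v+q-1)(q-1)}{(s-2v+2q)(q-1)-2(u+v)}, \] the sums being over integers $s,\epsilon$ in the indicated ranges.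
   Context: For integers $m\ge 0$ and $k$, $\binom mk$ is the usual binomial coefficient, equal to $0$ unless $0\le k\le m$; integers are interpreted in $\mathbb F_p$. *)

From HB Require Import structures.
From mathcomp Require Import all_boot all_order all_algebra.
Set Implicit Arguments. Unset Strict Implicit. Unset Printing Implicit Defensive.
Import Order.TTheory GRing.Theory Num.Theory.
Local Open Scope ring_scope.

Definition binz (m k : int) : nat :=
  if (0 <= k) && (k <= m) then 'C(absz m, absz k) else 0%N.

Definition irange (a b : int) : seq int :=
  [seq a + (i%:Z) | i <- iota 0 (absz (b - a + 1))].

From HB Require Import structures.
From mathcomp Require Import all_boot all_order all_algebra.
From mathcomp Require Import zify ring lra.
Set Implicit Arguments. Unset Strict Implicit. Unset Printing Implicit Defensive.
Import Order.TTheory GRing.Theory Num.Theory.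
Local Open Scope ring_scope.

(* Write n = u + v q, u + v = f (q - 1) + K with K < q - 1, and
   D = q (q - 1) + (q - 1 - K) - n.  For fixed (a, b), the congruence and the
   linear condition on (k, j) force k = q - 1 - K and j = D - (a + b q), so the
   inner double sum is C(a+b, a) times the coefficient of X^(D - a - b q) in
   (1 - X)^K.  Summing over (a, b), the left side is the coefficient of X^D in
   Phi (1 - X)^K with Phi = sum C(a+b, a) X^(a + b q) over the region.
   In characteristic p, (-1)^i C(q-1, i) = 1 for i < q, i.e.
   (x - y)^(q-1) = sum_(i < q) x^(q-1-i) y^i.  This gives both
   sum_(c < q) (X + X^q)^c = (1 - X - X^q)^(q-1) and the expansion of the latter
   as sum_(i < q) (1 - X)^(q-1-i) X^(q i), so the left side becomes
   sum_(i < q-1) [X^(D - q i)] (1 - X)^(q-1-i+K) - [X^D] (1 - X)^K.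
   On the right, the rational bounds say s - eps = f, resp. s - v + q - 1 = f,
   which selects a single s; the surviving terms are these same coefficients,
   up to a correction of 1 on both sides in the corner case u = v = q - 1. *)

Section IntegerIndexedCoefficients.
Variable R : nzRingType.
Implicit Types (P Q : {poly R}) (t : int).

Definition coefz P t : R := if 0 <= t then P`_(absz t) else 0.

Lemma coefzB P Q t : coefz (P - Q) t = coefz P t - coefz Q t.
Proof. by rewrite /coefz; case: ifP; rewrite ?coefB ?subr0. Qed.

Lemma coefzMn P t k : coefz (P *+ k) t = coefz P t *+ k.
Proof. by rewrite /coefz; case: ifP; rewrite ?coefMn ?mul0rn. Qed.

Lemma coefz_sum (I : Type) (r : seq I) (A : pred I) (G : I -> {poly R}) t :
  coefz (\sum_(i <- r | A i) G i) t = \sum_(i <- r | A i) coefz (G i) t.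
Proof. by rewrite /coefz; case: ifP => _; rewrite ?coef_sum // big1. Qed.

Lemma coefzXnM P (e : nat) t : coefz ('X^e * P) t = coefz P (t - e%:Z).
Proof.
rewrite /coefz coefXnM; case: (ltnP (absz t) e) => [lt_te | le_et].
  by case: ifP => // t_ge0; case: ifP => //; lia.
case: ifP => t_ge0; case: ifP => // ?; try congr P`_ _; lia.
Qed.

End IntegerIndexedCoefficients.

Lemma coef_1subX (R : comNzRingType) (K t : nat) :
  ((1 - 'X) ^+ K : {poly R})`_t = (-1) ^+ t * 'C(K, t)%:R.
Proof.
elim: K t => [|K IH] [|t]; rewrite ?expr0 ?coef1 ?expr0 ?mul1r ?mulr0 //.
  by rewrite exprS mulrBl mul1r coefB coefXM /= IH subr0 expr0 !bin0 mul1r.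
by rewrite exprS mulrBl mul1r coefB coefXM /= !IH binS natrD exprS; ring.
Qed.

Lemma coefz_1subX (R : comNzRingType) (K : nat) (t : int) :
  coefz ((1 - 'X) ^+ K : {poly R}) t = (-1) ^+ absz t * (binz K t)%:R.
Proof.
rewrite /coefz /binz coef_1subX; case: ifP => t_ge0 /=; last by rewrite mulr0.
by case: ifP => // ?; rewrite bin_small ?mulr0 //; lia.
Qed.

Lemma coef_1addX (R : comNzRingType) (K t : nat) :
  ((1 + 'X) ^+ K : {poly R})`_t = 'C(K, t)%:R.
Proof.
elim: K t => [|K IH] [|t]; rewrite ?expr0 ?coef1 //.
  by rewrite exprS mulrDl mul1r coefD coefXM /= IH addr0 !bin0.
by rewrite exprS mulrDl mul1r coefD coefXM /= !IH binS natrD addrC.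
Qed.

Section PrimeCharacteristicBinomials.
Variables (R : comNzRingType) (p m : nat).
Hypothesis pcharRp : p \in [pchar R].
Local Notation q := (p ^ m)%N.

Lemma expn_pchar_gt0 : (0 < q)%N.
Proof. by rewrite expn_gt0 prime_gt0 ?(pcharf_prime pcharRp). Qed.

Lemma bin_expn_pchar i : (0 < i < q)%N -> 'C(q, i)%:R = 0 :> R.
Proof.
case/andP=> i_gt0 lt_iq.
have pcharPq : [pchar {poly R}].-nat q.
  by rewrite pnatX (pnatE _ (pcharf_prime pcharRp)) pchar_poly pcharRp.
rewrite -coef_1addX (exprDn_pchar _ _ pcharPq) expr1n coefD coef1 coefXn.
by rewrite (gtn_eqF i_gt0) (ltn_eqF lt_iq) add0r.
Qed.

(* Pascal's rule and [bin_expn_pchar] make [(-1)^i 'C(q-1, i)] constant in [i]. *)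
Lemma signr_bin_predn_pchar i : (i < q)%N -> (-1) ^+ i * 'C(q.-1, i)%:R = 1 :> R.
Proof.
elim: i => [|i IH] lt_iq; first by rewrite expr0 bin0 mul1r.
have := bin_expn_pchar (i := i.+1); rewrite lt_iq => /(_ isT) /eqP.
rewrite -{1}(prednK expn_pchar_gt0) binS natrD addr_eq0 => /eqP ->.
by rewrite exprS mulrN -mulrA mulN1r opprK IH // ltnW.
Qed.

Lemma exprB_predn_pchar (x y : R) :
  (x - y) ^+ q.-1 = \sum_(0 <= i < q) x ^+ (q.-1 - i)%N * y ^+ i.
Proof.
rewrite exprDn (prednK expn_pchar_gt0) big_mkord; apply: eq_bigr => i _.
rewrite exprNn -mulr_natr -!mulrA; congr (_ * _).
by rewrite mulrCA signr_bin_predn_pchar ?mulr1.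
Qed.

End PrimeCharacteristicBinomials.

Section TriangleSums.
Variables (V : nmodType) (q : nat) (G : nat -> nat -> V).

Lemma big_triangle :
  \sum_(0 <= a < q) \sum_(0 <= b < q | (a + b < q)%N) G a b =
  \sum_(0 <= c < q) \sum_(0 <= i < c.+1) G i (c - i)%N.
Proof.
transitivity (\sum_(0 <= i < q) \sum_(0 <= c < q | (i <= c)%N) G i (c - i)%N).
  apply: eq_big_nat => i _.
  transitivity (\sum_(i <= c < q) G i (c - i)%N); last by rewrite big_geq_mkord big_mkord.
  rewrite -[X in \sum_(X <= c < q) _](add0n i) big_addn.
  rewrite (big_nat_widen _ _ _ _ _ (leq_subr i q)).
  by apply: eq_big => [b | b _]; rewrite ?addnK //; lia.
rewrite (exchange_big_dep_nat xpredT) //; apply: eq_big_nat => c /andP[_ lt_cq].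
by rewrite (big_nat_widen _ _ _ _ _ lt_cq).
Qed.

Lemma big_triangle_corners : (1 < q)%N ->
  \sum_(0 <= a < q) \sum_(0 <= b < q |
      [&& (b <= q - 2)%N, (0 < a + b)%N & (a + b <= q - 1)%N]) G a b
    + G 0 0 + G 0 (q - 1)%N =
  \sum_(0 <= a < q) \sum_(0 <= b < q | (a + b < q)%N) G a b.
Proof.
case: q => [|[|q']] // _; rewrite !(big_ltn (ltn0Sn _)) /=.
have -> : \sum_(1 <= a < q'.+2) \sum_(0 <= b < q'.+2 |
      [&& (b <= q'.+2 - 2)%N, (0 < a + b)%N & (a + b <= q'.+2 - 1)%N]) G a b
    = \sum_(1 <= a < q'.+2) \sum_(0 <= b < q'.+2 | (a + b < q'.+2)%N) G a b.
  by apply: eq_big_nat => a a_gt0; apply: eq_bigl => b; lia.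
rewrite (addrAC _ _ (G 0 0)) (addrAC _ _ (G 0 (_ - _))); congr (_ + _).
rewrite big_mkcond [RHS]big_mkcond.
rewrite big_ltn // [RHS]big_ltn // !(@big_nat_recr _ _ _ q'.+1 1) //=.
rewrite !subSS !subn0 !add0n ltnn ltnSn /= add0r addr0 addrAC addrC.
congr (_ + (_ + _)); last by rewrite ltnSn.
by apply: eq_big_nat => b /andP[b_gt0 lt_bq]; rewrite ifT ?ifT //; lia.
Qed.

End TriangleSums.

Section RegionGeneratingFunction.
Variables (R : comNzRingType) (p m : nat).
Hypotheses (pcharRp : p \in [pchar R]) (m_gt0 : (0 < m)%N).
Local Notation q := (p ^ m)%N.

Lemma expn_pchar_gt1 : (1 < q)%N.
Proof. by rewrite -(expn0 p) ltn_exp2l // prime_gt1 ?(pcharf_prime pcharRp). Qed.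

(* Over the triangle [a + b < q] the sum is [sum_(c < q) (X^q + X)^c]; the region
   omits its corners [(0, 0)] and [(0, q - 1)]. *)
Lemma region_genfun :
  \sum_(0 <= a < q) \sum_(0 <= b < q |
      [&& (b <= q - 2)%N, (0 < a + b)%N & (a + b <= q - 1)%N])
    ('X^(a + b * q)%N *+ 'C(a + b, a) : {poly R})
  = \sum_(0 <= i < q.-1) (1 - 'X) ^+ (q.-1 - i)%N * 'X^(q * i)%N - 1.
Proof.
set G := fun a b => ('X^(a + b * q)%N *+ 'C(a + b, a) : {poly R}).
have pcharP : p \in [pchar {poly R}] by rewrite pchar_poly.
have triangle : \sum_(0 <= a < q) \sum_(0 <= b < q | (a + b < q)%N) G a b =
                \sum_(0 <= c < q) ('X^q + 'X) ^+ c.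
  rewrite big_triangle; apply: eq_bigr => c _.
  rewrite exprDn big_mkord; apply: eq_bigr => i _.
  have le_ic : (i <= c)%N by rewrite -ltnS.
  by rewrite /G subnKC // -exprM -exprD; congr (_ ^+ _ *+ _); lia.
have geometric : \sum_(0 <= c < q) ('X^q + 'X : {poly R}) ^+ c =
    \sum_(0 <= i < q.-1) (1 - 'X) ^+ (q.-1 - i)%N * 'X^(q * i)%N + 'X^((q - 1) * q)%N.
  transitivity ((1 - ('X^q + 'X)) ^+ q.-1 : {poly R}).
    by rewrite exprB_predn_pchar //; apply: eq_bigr => c _; rewrite expr1n mul1r.
  rewrite opprD addrA addrAC exprB_predn_pchar //.
  rewrite -[X in \sum_(0 <= i < X) _ = _](prednK (expn_pchar_gt0 m pcharRp)).
  rewrite big_nat_recr //= subnn expr0 mul1r -exprM mulnC subn1.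
  by congr (_ + _); apply: eq_bigr => i _; rewrite exprM.
have := big_triangle_corners G expn_pchar_gt1.
rewrite triangle geometric /G /= mul0n !add0n !bin0 !mulr1n.
by move/addIr <-; rewrite addrK.
Qed.

Lemma region_sum_coefz (K : nat) (D : int) :
  \sum_(0 <= a < q) \sum_(0 <= b < q |
      [&& (b <= q - 2)%N, (0 < a + b)%N & (a + b <= q - 1)%N])
    'C(a + b, a)%:R * coefz ((1 - 'X) ^+ K : {poly R}) (D - (a%:Z + b%:Z * q%:Z))
  = \sum_(0 <= i < q.-1) coefz ((1 - 'X) ^+ (q.-1 - i + K) : {poly R}) (D - (q * i)%N%:Z)
    - coefz ((1 - 'X) ^+ K) D.
Proof.
transitivity (coefz ((\sum_(0 <= i < q.-1) (1 - 'X) ^+ (q.-1 - i)%N * 'X^(q * i)%N - 1)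
                     * (1 - 'X) ^+ K : {poly R}) D).
  rewrite -region_genfun mulr_suml coefz_sum; apply: eq_bigr => a _.
  rewrite mulr_suml coefz_sum; apply: eq_bigr => b _.
  by rewrite [in RHS]mulrnAl coefzMn coefzXnM mulr_natl PoszD PoszM.
rewrite mulrBl mul1r coefzB mulr_suml coefz_sum; congr (_ - _).
by apply: eq_bigr => i _; rewrite mulrAC -exprD mulrC coefzXnM.
Qed.

End RegionGeneratingFunction.

Lemma dvdz_small (d m : int) : (absz m < absz d)%N -> (d %| m)%Z = (m == 0).
Proof.
rewrite dvdzE -absz_eq0; case: (posnP (absz m)) => [-> | m_gt0 lt_md].
  by rewrite dvdn0.
by rewrite gtnNdvd // gtn_eqF.
Qed.

Section InnerSum.
Variables (R : comNzRingType) (q n K c : nat).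
Hypotheses (K_lt : (K < q - 1)%N) (n_eq : n = (c * (q - 1) + K)%N).

Lemma inner_sum_coefz (a b : nat) :
  \sum_(1 <= k < q) \sum_(0 <= j < q |
      [&& (k + j <= q - 1)%N,
          ((2 * k%:Z - j%:Z) == (a + b)%:Z %[mod (q - 1)%:Z])%Z &
          (q%:Z * (q%:Z - 1) + k%:Z - j%:Z - (a%:Z + b%:Z * q%:Z) == n%:Z)])
    (('C(a + b, a) * 'C(q - 1 - k, j))%:R * (-1) ^+ j : R)
  = 'C(a + b, a)%:R * coefz ((1 - 'X) ^+ K)
      (q%:Z * (q%:Z - 1) + (q - 1 - K)%N%:Z - n%:Z - (a%:Z + b%:Z * q%:Z)).
Proof.
set k0 := (q - 1 - K)%N; set T := (X in coefz _ X).
(* [j] is determined by [k], and then the congruence says [k = k0 mod (q - 1)]. *)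
have congr_k0 k j : (1 <= k < q)%N ->
    q%:Z * (q%:Z - 1) + k%:Z - j%:Z - (a%:Z + b%:Z * q%:Z) = n%:Z ->
    ((2 * k%:Z - j%:Z) == (a + b)%:Z %[mod (q - 1)%:Z])%Z = (k == k0).
  move=> k_range j_eq; rewrite eqz_mod_dvd.
  rewrite (_ : _ - _ = (k%:Z - k0%:Z) + (c%:Z + b%:Z - q%:Z + 1) * (q - 1)%N%:Z); last first.
    by rewrite /k0; lia.
  by rewrite rpredDr ?dvdz_mull // dvdz_small; lia.
transitivity (\sum_(1 <= k < q | k == k0) \sum_(0 <= j < q |
    (j%:Z == T) && (j <= K)%N) (('C(a + b, a) * 'C(q - 1 - k, j))%:R * (-1) ^+ j : R)).
  rewrite [RHS]big_mkcond; apply: eq_big_nat => k k_range.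
  case: eqP => [-> | /eqP k_neq].
    apply: eq_bigl => j; apply/and3P/andP => [[le_j eq_k0 /eqP j_eq] | [/eqP j_eq le_j]].
      by split; [apply/eqP | ]; rewrite /T /k0 in j_eq *; lia.
    have j_eq' : q%:Z * (q%:Z - 1) + k0%:Z - j%:Z - (a%:Z + b%:Z * q%:Z) = n%:Z.
      by rewrite /T /k0 in j_eq *; lia.
    by split; [rewrite /k0; lia | rewrite congr_k0 // /k0; lia | apply/eqP].
  rewrite big_pred0 // => j; apply/and3P => -[_ + /eqP j_eq].
  by rewrite congr_k0 // (negbTE k_neq).
rewrite big_nat1_eq ifT; last by rewrite /k0; lia.
rewrite (_ : (q - 1 - k0 = K)%N); last by rewrite /k0; lia.
rewrite coefz_1subX /binz; case: ifP => T_range.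
  rewrite (eq_bigl (fun j => j == absz T)) ?big_nat1_eq; last by move=> j /=; lia.
  by rewrite ifT ?absz_nat ?natrM; [ring | lia].
rewrite !mulr0 big1 // => j /andP[/eqP j_eq le_j].
by move: T_range; rewrite -j_eq; lia.
Qed.

End InnerSum.

Lemma expN1zE (R : unitRingType) (i : int) : (-1 : R) ^ i = (-1) ^+ odd (absz i).
Proof.
rewrite signr_odd; case: i => n; first by rewrite exprnP absz_nat.
by rewrite NegzE abszN absz_nat -invr_expz -exprnP -exprVn invrN1.
Qed.

(* [irange] wraps around when [b < a - 1], because of [absz] in its definition. *)
Lemma mem_irange (a b x : int) : a <= b + 1 -> (x \in irange a b) = (a <= x <= b).
Proof.
move=> le_ab; apply/mapP/idP => [[i] | x_range]; first by rewrite mem_iota; lia.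
by exists (absz (x - a)); rewrite ?mem_iota; lia.
Qed.

Lemma irange_uniq (a b : int) : uniq (irange a b).
Proof. by rewrite map_inj_uniq ?iota_uniq // => i j /addrI /eqP; rewrite eqz_nat => /eqP. Qed.

Lemma big_irange_pred1 (V : nmodType) (a b x : int) (G : int -> V) : a <= b + 1 ->
  \sum_(s <- irange a b | s == x) G s = if a <= x <= b then G x else 0.
Proof.
move=> le_ab; case: ifPn => x_range.
  by rewrite -big_filter filter_pred1_uniq ?irange_uniq ?mem_irange // big_seq1.
by rewrite big1_seq // => s /andP[/eqP ->]; rewrite mem_irange // (negbTE x_range).
Qed.

Section Filters.
Variables (q u v f K : nat).
Hypotheses (uv_eq : (u + v = f * (q - 1) + K)%N) (K_lt : (K < q - 1)%N).
Local Notation r := ((u + v)%:R / (q - 1)%:R : rat).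

Lemma floor_ratioE (z : int) : (z%:~R <= r) && (r < (z + 1)%:~R) = (z == f).
Proof.
have q1_gt0 : (0 : rat) < (q - 1)%:R by rewrite ltr0n; lia.
rewrite ler_pdivlMr // ltr_pdivrMr //.
rewrite -[(u + v)%:R]/((u + v)%N%:Z%:~R : rat) -[(q - 1)%:R]/((q - 1)%N%:Z%:~R : rat).
rewrite -!intrM ler_int ltr_int.
by apply/andP/eqP => [[]|->]; nia.
Qed.

Lemma eps_filterE (s e : int) :
  (Num.max (s%:~R - r) (v%:Z - q%:Z + 1)%:~R <= e%:~R)
    && (e%:~R < Num.min (s%:~R - r + 1) v%:R)
  = [&& s - e == f, v%:Z - q%:Z + 1 <= e & e < v%:Z].
Proof.
rewrite ge_max lt_min ler_int -(ltr_int rat) -(floor_ratioE (s - e)).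
have -> : (s%:~R - r <= e%:~R) = ((s - e)%:~R <= r).
  by rewrite rmorphB /=; apply/idP/idP; lra.
have -> : (e%:~R < s%:~R - r + 1) = (r < (s - e + 1)%:~R).
  by rewrite [(s - e + 1)%:~R]rmorphD rmorphB /=; apply/idP/idP; lra.
by case: (_ <= r); case: (r < _); case: (_ <= e); case: (e%:~R < _).
Qed.

Lemma s_filterE (s : int) :
  (Num.max (-2) (v%:~R - q%:~R + r) < s%:~R)
    && (s%:~R <= Num.min 1 (v%:~R - q%:~R + r + 1))
  = [&& s - v%:Z + q%:Z - 1 == f, -2 < s & s <= 1].
Proof.
rewrite gt_max le_min -(ltr_int rat) -(ler_int rat) -(floor_ratioE (s - v%:Z + q%:Z - 1)).
have -> : (v%:~R - q%:~R + r < s%:~R) = (r < (s - v%:Z + q%:Z - 1 + 1)%:~R).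
  by rewrite [(s - _ + _ - 1 + 1)%:~R]rmorphD !rmorphB rmorphD /=; apply/idP/idP; lra.
have -> : (s%:~R <= v%:~R - q%:~R + r + 1) = ((s - v%:Z + q%:Z - 1)%:~R <= r).
  by rewrite !rmorphB rmorphD /=; apply/idP/idP; lra.
by case: (_ <= r); case: (r < _); case: (_ < s%:~R); case: (s%:~R <= _).
Qed.

Lemma big_eps_filter (V : nmodType) (G : int -> V) (e : int) :
  v%:Z - q%:Z + 1 <= e <= v%:Z - 1 ->
  \sum_(s <- irange (-1) 1 | (Num.max (s%:~R - r) (v%:Z - q%:Z + 1)%:~R <= e%:~R)
                            && (e%:~R < Num.min (s%:~R - r + 1) v%:R)) G s
  = if -1 <= e + f%:Z <= 1 then G (e + f%:Z) else 0.
Proof.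
move=> e_range; rewrite (eq_bigl (pred1 (e + f%:Z))) => [|s].
  exact: big_irange_pred1.
by rewrite eps_filterE /=; lia.
Qed.

Lemma big_s_filter (V : nmodType) (G : int -> V) :
  \sum_(s <- irange (-2) 1 | (Num.max (-2) (v%:~R - q%:~R + r) < s%:~R)
                            && (s%:~R <= Num.min 1 (v%:~R - q%:~R + r + 1))) G s
  = if -2 < f%:Z + v%:Z - q%:Z + 1 <= 1 then G (f%:Z + v%:Z - q%:Z + 1) else 0.
Proof.
case: ifPn => g_range.
  rewrite (eq_bigl (pred1 (f%:Z + v%:Z - q%:Z + 1))) => [|s]; last by rewrite s_filterE /=; lia.
  by rewrite big_irange_pred1 // ifT //; lia.
by rewrite big_pred0 // => s; rewrite s_filterE; lia.
Qed.

End Filters.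

Section RightHandSide.
Variables (R : comUnitRingType) (q u v f K : nat).
Hypotheses (q_odd : odd q) (u_le : (u <= q - 1)%N) (v_le : (v <= q - 1)%N)
  (uv_eq : (u + v = f * (q - 1) + K)%N) (K_lt : (K < q - 1)%N).

Lemma odd_predn_half : exists2 h, q = (2 * h + 1)%N & (u + v = 2 * (f * h) + K)%N.
Proof. by exists q./2; [lia | rewrite uv_eq; nia]. Qed.

(* The coefficient [X^(D - q i)] (1 - X)^(q - 1 - i + K) of the left side, indexed by
   [e = v - q + 1 + i]. *)
Definition gf_coef (e : int) : R :=
  coefz ((1 - 'X) ^+ absz (K%:Z + v%:Z - e)%R) ((1 - e) * (q%:Z - 1) - u%:Z - K%:Z - e).

Lemma gf_coef_outside (e : int) : v%:Z - q%:Z + 1 <= e <= v%:Z - 1 ->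
  ~~ (-1 <= e + f%:Z <= 1) -> gf_coef e = if (f == 2%N) && (e == 0) then 1 else 0.
Proof.
move=> e_range ef_range; rewrite /gf_coef coefz_1subX /binz.
case: (boolP ((f == 2%N) && (e == 0))) => [/andP[/eqP f2 /eqP ->] | not_special].
  have [-> -> ->] : [/\ u = (q - 1)%N, v = (q - 1)%N & K = 0%N].
    by move: (uv_eq); rewrite f2 => ?; split; lia.
  set t := (_ * _ - _ - _ - _)%R; have -> : t = 0 by rewrite /t; lia.
  by rewrite /= bin0 expr0 mul1r.
by rewrite ifF ?mulr0 //; apply/negbTE; nia.
Qed.

Lemma gf_coefE (s e : int) : s - e = f%:Z -> e < v%:Z ->
  (-1) ^ (v%:Z + e) *
    (binz (u%:Z + 2 * v%:Z - (s - e) * (q%:Z - 1) - e)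
          ((s - 2 * e + 1) * (q%:Z - 1) - 2 * u%:Z - v%:Z - e))%:R
  = gf_coef e.
Proof.
move=> se_eq lt_ev; have [h q_eq uv_h] := odd_predn_half.
have -> : s = e + f%:Z by lia.
rewrite /gf_coef coefz_1subX expN1zE -[(-1) ^+ absz _]signr_odd.
by congr (_ ^+ _ * (binz _ _)%:R); rewrite ?q_eq; lia.
Qed.

Local Notation r := ((u + v)%:R / (q - 1)%:R : rat).

Lemma rhs_eps_sumE :
  \sum_(s <- irange (-1) 1)
     \sum_(e <- irange (v%:Z - q%:Z + 1) (v%:Z - 1) |
         (Num.max (s%:~R - r) (v%:Z - q%:Z + 1)%:~R <= e%:~R)
         && (e%:~R < Num.min (s%:~R - r + 1) v%:R))
       ((-1) ^ (v%:Z + e) *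
        (binz (u%:Z + 2 * v%:Z - (s - e) * (q%:Z - 1) - e)
              ((s - 2 * e + 1) * (q%:Z - 1) - 2 * u%:Z - v%:Z - e))%:R : R)
  = \sum_(e <- irange (v%:Z - q%:Z + 1) (v%:Z - 1)) gf_coef e - (f == 2%N)%:R.
Proof.
have le_range : v%:Z - q%:Z + 1 <= v%:Z - 1 + 1 by lia.
rewrite (exchange_big_dep xpredT) //=.
transitivity (\sum_(e <- irange (v%:Z - q%:Z + 1) (v%:Z - 1))
                (if -1 <= e + f%:Z <= 1 then gf_coef e else 0)).
  apply: eq_big_seq => e; rewrite mem_irange // => e_range.
  by rewrite (big_eps_filter uv_eq K_lt) //; case: ifP => // _; apply: gf_coefE; lia.
have split_coef e : e \in irange (v%:Z - q%:Z + 1) (v%:Z - 1) ->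
    gf_coef e = (if -1 <= e + f%:Z <= 1 then gf_coef e else 0)
                + (if (f == 2%N) && (e == 0) then 1 else 0).
  rewrite mem_irange // => e_range; case: ifPn => ef_range.
    by rewrite ifF ?addr0 //; lia.
  by rewrite add0r gf_coef_outside.
rewrite (eq_big_seq _ split_coef) big_split /=.
have -> : \sum_(e <- irange (v%:Z - q%:Z + 1) (v%:Z - 1))
            (if (f == 2%N) && (e == 0) then 1 else 0) = (f == 2%N)%:R :> R.
  rewrite -big_mkcond; case: eqP => [f2 | _]; last by rewrite big_pred0.
  by rewrite (eq_bigl (pred1 0)) ?big_irange_pred1 ?ifT //; lia.
by rewrite addrK.
Qed.

Local Notation D := (q%:Z * (q%:Z - 1) + (q - 1 - K)%N%:Z - (u%:Z + v%:Z * q%:Z)).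

Lemma sum_coefz_reindex :
  \sum_(0 <= i < q.-1) coefz ((1 - 'X) ^+ (q.-1 - i + K)) (D - (q * i)%N%:Z)
  = \sum_(e <- irange (v%:Z - q%:Z + 1) (v%:Z - 1)) gf_coef e.
Proof.
rewrite /irange big_map (_ : absz _ = q.-1); last by lia.
rewrite /index_iota subn0; apply: eq_big_seq => i; rewrite mem_iota => i_range.
by rewrite /gf_coef; congr (coefz ((1 - 'X) ^+ _) _); lia.
Qed.

Lemma rhs_s_sumE :
  \sum_(s <- irange (-2) 1 |
         (Num.max (-2) (v%:~R - q%:~R + r) < s%:~R)
         && (s%:~R <= Num.min 1 (v%:~R - q%:~R + r + 1)))
     ((binz (u%:Z + v%:Z - (s - v%:Z + q%:Z - 1) * (q%:Z - 1))
            ((s - 2 * v%:Z + 2 * q%:Z) * (q%:Z - 1) - 2 * (u%:Z + v%:Z)))%:R : R)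
  = coefz ((1 - 'X) ^+ K) D - (f == 2%N)%:R.
Proof.
have [h q_eq uv_h] := odd_predn_half.
have D_sign : (-1) ^+ absz D = 1 :> R.
  by rewrite -signr_odd (_ : odd _ = false) //; rewrite q_eq; lia.
rewrite (big_s_filter uv_eq K_lt) coefz_1subX D_sign mul1r.
case: ifPn => g_range.
  by rewrite (_ : f == 2%N = false) ?subr0; [congr (binz _ _)%:R | ]; lia.
case: (eqVneq f 2%N) => [f2 | f_neq2]; last first.
  by rewrite /binz ifF ?subr0 //; nia.
have [-> -> ->] : [/\ u = (q - 1)%N, v = (q - 1)%N & K = 0%N] by rewrite f2 in uv_h; split; lia.
by rewrite (_ : _ - (_ + _) = 0) ?subrr //; lia.
Qed.

End RightHandSide.

Theorem lemma4p3 (p m q n u v : nat)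
  (hp : prime p) (hodd : odd p) (hm : (0 < m)%N) (hq : q = (p ^ m)%N)
  (hn1 : (1 <= n)%N) (hn2 : (n <= q ^ 2 - 1)%N)
  (hu : (u <= q - 1)%N) (hv : (v <= q - 1)%N) (huv : n = (u + v * q)%N) :
  let r : rat := (u + v)%:R / (q - 1)%:R in
  (\sum_(0 <= a < q) \sum_(0 <= b < q | [&& (b <= q - 2)%N, (0 < a + b)%N & (a + b <= q - 1)%N])
     \sum_(1 <= k < q) \sum_(0 <= j < q |
         [&& (k + j <= q - 1)%N,
             ((2 * k%:Z - j%:Z) == (a + b)%:Z %[mod (q - 1)%:Z])%Z &
             (q%:Z * (q%:Z - 1) + k%:Z - j%:Z - (a%:Z + b%:Z * q%:Z) == n%:Z)])
       (('C(a + b, a) * 'C(q - 1 - k, j))%:R * (-1) ^+ j : 'F_p))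
  =
  (\sum_(s <- irange (-1) 1)
     \sum_(e <- irange (v%:Z - q%:Z + 1) (v%:Z - 1) |
         (Num.max (s%:~R - r) (v%:Z - q%:Z + 1)%:~R <= e%:~R)
         && (e%:~R < Num.min (s%:~R - r + 1) v%:R))
       ((-1) ^ (v%:Z + e) *
        (binz (u%:Z + 2 * v%:Z - (s - e) * (q%:Z - 1) - e)
              ((s - 2 * e + 1) * (q%:Z - 1) - 2 * u%:Z - v%:Z - e))%:R : 'F_p))
  -
  (\sum_(s <- irange (-2) 1 |
         (Num.max (-2) (v%:~R - q%:~R + r) < s%:~R)
         && (s%:~R <= Num.min 1 (v%:~R - q%:~R + r + 1)))
     ((binz (u%:Z + v%:Z - (s - v%:Z + q%:Z - 1) * (q%:Z - 1))
            ((s - 2 * v%:Z + 2 * q%:Z) * (q%:Z - 1) - 2 * (u%:Z + v%:Z)))%:R : 'F_p)).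
Proof.
move=> r; rewrite {}/r.
have pcharFp := pchar_Fp hp.
have q_odd : odd q by rewrite hq oddX hodd orbT.
have q_gt1 : (1 < q)%N by rewrite hq (expn_pchar_gt1 pcharFp).
set f := ((u + v) %/ (q - 1))%N; set K := ((u + v) %% (q - 1))%N.
have uv_eq : (u + v = f * (q - 1) + K)%N by rewrite /f /K -divn_eq.
have K_lt : (K < q - 1)%N by rewrite /K ltn_pmod //; lia.
have n_eq : n = ((f + v) * (q - 1) + K)%N by rewrite huv; nia.
under eq_bigr => a _ do under eq_bigr => b _ do rewrite (inner_sum_coefz _ K_lt n_eq).
subst q; rewrite (region_sum_coefz pcharFp hm) huv PoszD PoszM.
rewrite (sum_coefz_reindex _ q_odd hu hv uv_eq K_lt) (rhs_eps_sumE _ q_odd hu hv uv_eq K_lt).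
rewrite (rhs_s_sumE _ q_odd hu hv uv_eq K_lt).
by rewrite opprB addrA subrK.
Qed.
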